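(* Let $E_1$, $E_2$ be para-Hilbert spaces and $A=(X_A,H_A,Y_A)\colon E_1\to E_2$ a morphism. Define $X_A^*:=J_{E_1}^{-1}\,Y_A'\,J_{E_2}$. Then $X_A^*$ is a continuous linear operator from $X_{E_2}$ to $X_{E_1}$ and $g_{E_1}(X_A^*u_2,u_1)=g_{E_2}(u_2,X_Au_1)$ for all $u_1\in X_{E_1}$ and $u_2\in X_{E_2}$.
   Context: A para-Hilbert space $E$ consists of Banach spaces $X_E,Y_E$, a Hilbert space $H_E$ with inner product $\langle\cdot,\cdot\rangle_{H_E}$ and Riesz isomorphism $I_E\colon H_E\to H_E'$, bounded linear injections with dense image $i_E\colon X_E\to H_E$, $j_E\colon H_E\to Y_E$, and an isomorphism of Banach spaces $J_E\colon X_E\to Y_E'$ such that $j_E'\circ J_E=I_E\circ i_E$ ($'$ denotes duals and dual operators). Its pre-Hilbert metric is $g_E(x_1,x_2)=\langle i_Ex_1,i_Ex_2\rangle_{H_E}$ for $x_1,x_2\in X_E$. A morphism $A\colon E_1\to E_2$ is a triple of bounded linear operators $X_A\colon X_{E_1}\to X_{E_2}$, $H_A\colon H_{E_1}\to H_{E_2}$, $Y_A\colon Y_{E_1}\to Y_{E_2}$ with $i_{E_2}X_A=H_Ai_{E_1}$ and $j_{E_2}H_A=Y_Aj_{E_1}$. *)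

From HB Require Import structures.
From mathcomp Require Import all_boot all_order all_algebra.
From mathcomp Require Import all_classical all_reals all_analysis.
Set Implicit Arguments. Unset Strict Implicit. Unset Printing Implicit Defensive.
Import Order.TTheory GRing.Theory Num.Theory.
Import numFieldNormedType.Exports.
Local Open Scope classical_set_scope.
Local Open Scope ring_scope.

Definition lin (R : realType) (U V : normedModType R) (f : U -> V) : Prop :=
  forall (a : R) (u v : U), f (a *: u + v) = a *: f u + f v.

Definition linfun (R : realType) (U : normedModType R) (f : U -> R) : Prop :=
  forall (a : R) (u v : U), f (a *: u + v) = a * f u + f v.

Definition functional_bound (R : realType) (U : normedModType R)
  (f : U -> R) (M : R) : Prop := forall u : U, `|f u| <= M * `|u|.

(* X, Y, H are Banach spaces; H carries an inner product inducing its norm,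
   so it is a Hilbert space; the Riesz map is I_E h = <h, .>.
   An element of Y' is represented by a continuous linear functional Y -> R.
   J_E : X -> Y' is represented by the pairing (x, y) |-> (J_E x) y, together
   with its inverse Jinv (an isomorphism of Banach spaces has a bounded
   inverse; Jinv is only constrained on Y'). *)
Record paraHilbert (R : realType) (X Y H : completeNormedModType R) := {
  ph_inner : H -> H -> R;
  ph_inner_linl : forall (a : R) (u v w : H),
      ph_inner (a *: u + v) w = a * ph_inner u w + ph_inner v w;
  ph_inner_sym : forall u v : H, ph_inner u v = ph_inner v u;
  ph_inner_norm : forall u : H, ph_inner u u = `|u| ^+ 2;
  ph_i : X -> H;
  ph_i_lin : lin ph_i;
  ph_i_cont : continuous ph_i;
  ph_i_inj : injective ph_i;
  ph_i_dense : closure (range ph_i) = setT;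
  ph_j : H -> Y;
  ph_j_lin : lin ph_j;
  ph_j_cont : continuous ph_j;
  ph_j_inj : injective ph_j;
  ph_j_dense : closure (range ph_j) = setT;
  ph_J : X -> Y -> R;
  ph_J_linl : forall (a : R) (x x' : X) (y : Y),
      ph_J (a *: x + x') y = a * ph_J x y + ph_J x' y;
  ph_J_linr : forall x : X, linfun (ph_J x);
  ph_J_bounded : exists C : R, forall (x : X) (y : Y),
      `|ph_J x y| <= C * `|x| * `|y|;
  ph_Jinv : (Y -> R) -> X;
  ph_Jinv_J : forall x : X, ph_Jinv (ph_J x) = x;
  ph_J_Jinv : forall phi : Y -> R, linfun phi ->
      (exists M : R, functional_bound phi M) -> ph_J (ph_Jinv phi) = phi;
  ph_Jinv_bounded : exists C : R, 0 < C /\ forall (phi : Y -> R) (M : R),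
      linfun phi -> 0 <= M -> functional_bound phi M ->
      `|ph_Jinv phi| <= C * M;
  (* j_E' o J_E = I_E o i_E *)
  ph_compat : forall (x : X) (h : H), ph_J x (ph_j h) = ph_inner (ph_i x) h
}.

Definition ph_g (R : realType) (X Y H : completeNormedModType R)
  (E : paraHilbert X Y H) (x1 x2 : X) : R :=
  ph_inner E (ph_i E x1) (ph_i E x2).

Record phMorphism (R : realType)
  (X1 Y1 H1 X2 Y2 H2 : completeNormedModType R)
  (E1 : paraHilbert X1 Y1 H1) (E2 : paraHilbert X2 Y2 H2) := {
  mXA : X1 -> X2; mHA : H1 -> H2; mYA : Y1 -> Y2;
  mXA_lin : lin mXA; mHA_lin : lin mHA; mYA_lin : lin mYA;
  mXA_cont : continuous mXA; mHA_cont : continuous mHA;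
  mYA_cont : continuous mYA;
  m_comm_i : forall x : X1, ph_i E2 (mXA x) = mHA (ph_i E1 x);
  m_comm_j : forall h : H1, ph_j E2 (mHA h) = mYA (ph_j E1 h)
}.

Definition XAstar (R : realType)
  (X1 Y1 H1 X2 Y2 H2 : completeNormedModType R)
  (E1 : paraHilbert X1 Y1 H1) (E2 : paraHilbert X2 Y2 H2)
  (A : phMorphism E1 E2) (u2 : X2) : X1 :=
  ph_Jinv E1 (fun y1 : Y1 => ph_J E2 u2 (mYA A y1)).

From Pilot Require Import Defs.
From HB Require Import structures.
From mathcomp Require Import all_boot all_order all_algebra.
From mathcomp Require Import all_classical all_reals all_analysis.
Import Order.TTheory GRing.Theory Num.Theory.
Import numFieldNormedType.Exports.
Local Open Scope ring_scope.

(* The functional y1 |-> (J_E2 u2) (Y_A y1) is linear and bounded by a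
   multiple of |u2|, so J_E1 (X_A^* u2) is exactly this functional.  Linearity
   of X_A^* then follows from injectivity of J_E1, continuity from the bound on
   J_E1^{-1}, and the adjoint identity from j_E' J_E = I_E i_E used in E1 and
   in E2, linked by i_E2 X_A = H_A i_E1 and j_E2 H_A = Y_A j_E1. *)

Section LinearBounded.
Variables (R : realType) (U V : normedModType R).

Definition linear_of_lin (f : U -> V) (hf : lin f) : {linear U -> V} :=
  HB.pack f (GRing.isLinear.Build R U V *:%R f hf).
Arguments linear_of_lin {f}.

Lemma lin_continuous_bounded (f : U -> V) : lin f -> continuous f ->
  exists K : R, 0 < K /\ forall x, `|f x| <= K * `|x|.
Proof.
move=> hf fc.
have /(linear_boundedP (linear_of_lin hf)) [M [_ HM]] :=
  continuous_linear_bounded 0 (f := linear_of_lin hf) (fc 0).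
exists (Num.max M 0 + 1); split; last apply: HM;
  by rewrite ltr_pwDr // le_max lexx ?orbT.
Qed.

Lemma lin_bounded_continuous (f : U -> V) (K : R) : lin f ->
  (forall x, `|f x| <= K * `|x|) -> continuous f.
Proof.
move=> hf HK; apply: (bounded_linear_continuous (f := linear_of_lin hf)).
apply/(linear_boundedP (linear_of_lin hf)).
exists K; split=> [|r Kr x]; first by rewrite num_real.
by apply: (le_trans (HK x)); rewrite ler_wpM2r // ltW.
Qed.

End LinearBounded.
Arguments lin_continuous_bounded {R U V f}.
Arguments lin_bounded_continuous {R U V f K}.

Section ParaHilbert.
Variables (R : realType) (X Y H : completeNormedModType R).
Variable E : paraHilbert X Y H.

Lemma ph_J_inj : injective (ph_J E).
Proof. by move=> x x' eqJ; rewrite -(ph_Jinv_J E x) eqJ ph_Jinv_J. Qed.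

Lemma ph_J_bounded_ge0 : exists C : R, 0 <= C /\
  forall (x : X) (y : Y), `|ph_J E x y| <= C * `|x| * `|y|.
Proof.
have [C HC] := ph_J_bounded E.
exists `|C|; split=> // x y; apply: (le_trans (HC x y)).
by rewrite ler_wpM2r // ler_wpM2r // ler_norm.
Qed.

End ParaHilbert.
Arguments ph_J_inj {R X Y H} E.
Arguments ph_J_bounded_ge0 {R X Y H} E.

Section Adjoint.
Variables (R : realType) (X1 Y1 H1 X2 Y2 H2 : completeNormedModType R).
Variables (E1 : paraHilbert X1 Y1 H1) (E2 : paraHilbert X2 Y2 H2).
Variable A : phMorphism E1 E2.

Definition transpose_YA_J (u2 : X2) (y1 : Y1) : R := ph_J E2 u2 (mYA A y1).

Lemma transpose_YA_J_linfun (u2 : X2) : Defs.linfun (transpose_YA_J u2).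
Proof. by move=> a u v; rewrite /transpose_YA_J (mYA_lin A) (ph_J_linr E2). Qed.

Lemma transpose_YA_J_bound : exists K : R, 0 <= K /\
  forall u2, functional_bound (transpose_YA_J u2) (K * `|u2|).
Proof.
have [C [C_ge0 HC]] := ph_J_bounded_ge0 E2.
have [K [K_gt0 HK]] := lin_continuous_bounded (mYA_lin A) (mYA_cont (p := A)).
exists (C * K); split=> [|u2 y]; first by rewrite mulr_ge0 // ltW.
apply: (le_trans (HC u2 (mYA A y))).
by rewrite -!mulrA ler_wpM2l // mulrCA ler_wpM2l.
Qed.

Lemma ph_J_XAstar (u2 : X2) : ph_J E1 (XAstar A u2) = transpose_YA_J u2.
Proof.
apply: (ph_J_Jinv E1 (transpose_YA_J_linfun u2)).
have [K [_ HK]] := transpose_YA_J_bound.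
by exists (K * `|u2|); apply: HK.
Qed.

Lemma XAstar_lin : lin (XAstar A).
Proof.
move=> a u v; apply: (ph_J_inj E1); apply: funext => y.
by rewrite (ph_J_linl E1) !ph_J_XAstar /transpose_YA_J (ph_J_linl E2).
Qed.

Lemma XAstar_continuous : continuous (XAstar A).
Proof.
have [C [_ HC]] := ph_Jinv_bounded E1.
have [K [K_ge0 HK]] := transpose_YA_J_bound.
apply: (lin_bounded_continuous (K := C * K) XAstar_lin) => u2.
rewrite -mulrA; apply: HC => //; last exact: HK.
- exact: transpose_YA_J_linfun.
- exact: mulr_ge0.
Qed.

Lemma ph_g_XAstar (u1 : X1) (u2 : X2) :
  ph_g E1 (XAstar A u2) u1 = ph_g E2 u2 (mXA A u1).
Proof.
rewrite /ph_g -(ph_compat E1) ph_J_XAstar /transpose_YA_J.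
by rewrite -(m_comm_j A) -(m_comm_i A) (ph_compat E2).
Qed.

End Adjoint.

Theorem proposition2p10 (R : realType)
  (X1 Y1 H1 X2 Y2 H2 : completeNormedModType R)
  (E1 : paraHilbert X1 Y1 H1) (E2 : paraHilbert X2 Y2 H2)
  (A : phMorphism E1 E2) :
  lin (XAstar A) /\ continuous (XAstar A) /\
  forall (u1 : X1) (u2 : X2),
    ph_g E1 (XAstar A u2) u1 = ph_g E2 u2 (mXA A u1).
Proof.
split; first exact: XAstar_lin.
split; first exact: XAstar_continuous.
exact: ph_g_XAstar.
Qed.
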